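(* Let $D$ be a series-parallel digraph with source $s$, sink $t$ and travel times $\tau\ge0$, let $\boldsymbol{P}^*$ be an optimal path profile for \textsc{Min-Max Disjoint Paths} on $D$ with $k$ paths, and let $\boldsymbol{P}$ be a path profile of $k$ pairwise arc-disjoint $s$-$t$-paths in $D$ that is consistent with $\boldsymbol{P}^*$ and balanced in $D$. Then $C_{\max}(\boldsymbol{P},D)\le H_k\cdot C_{\max}(\boldsymbol{P}^*,D)$.
   Context: $H_k=\sum_{j=1}^k\frac1j$. For a path profile (tuple of pairwise arc-disjoint $s$-$t$-paths) $\boldsymbol{P}$: $\tau(P)=\sum_{a\in P}\tau_a$, $C_{\max}(\boldsymbol{P},D)=\max_{P\in\boldsymbol{P}}\tau(P)$, $\theta(\boldsymbol{P},D)=\sum_{P\in\boldsymbol{P}}\tau(P)$. $\boldsymbol{P}$ is consistent with $\boldsymbol{P}^*$ in $D$ if it has the same number $k$ of paths and $\theta(\boldsymbol{P},D)\le\theta(\boldsymbol{P}^*,D)$. If the path lengths of $\boldsymbol{P}$ are $p_1\ge\dots\ge p_k$, then $\boldsymbol{P}$ is balanced in $D$ if $\frac1i\sum_{j=1}^ip_j-p_{i+1}\le C_{\max}(\boldsymbol{P}^*,D)$ for all $i\in[k-1]$. *)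

From HB Require Import structures.
From mathcomp Require Import all_boot all_order all_algebra.
Set Implicit Arguments. Unset Strict Implicit. Unset Printing Implicit Defensive.
Import Order.TTheory GRing.Theory Num.Theory.
Local Open Scope ring_scope.

Definition harmonic (R : realFieldType) (k : nat) : R :=
  \sum_(1 <= j < k.+1) (j%:R)^-1.

Section Digraph.
Variables (V A : finType) (tl hd : A -> V).

Definition verts (E : {set A}) : {set V} :=
  [set v | [exists a in E, (tl a == v) || (hd a == v)]].

(* Two-terminal series-parallel (multi)digraphs, given by arc set and
   terminals (source, sink). *)
Inductive sp : {set A} -> V -> V -> Prop :=
| sp_arc a : tl a != hd a -> sp [set a] (tl a) (hd a)
| sp_series E1 E2 s u t :
    sp E1 s u -> sp E2 u t -> [disjoint E1 & E2] ->
    verts E1 :&: verts E2 = [set u] -> sp (E1 :|: E2) s t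
| sp_parallel E1 E2 s t :
    sp E1 s t -> sp E2 s t -> [disjoint E1 & E2] ->
    verts E1 :&: verts E2 = [set s; t] -> sp (E1 :|: E2) s t.

Definition series_parallel (s t : V) : Prop :=
  sp [set: A] s t /\ verts [set: A] = [set: V].

Fixpoint walk_from (v : V) (p : seq A) : bool :=
  if p is a :: p' then (tl a == v) && walk_from (hd a) p' else true.

Definition st_path (s t : V) (p : seq A) : bool :=
  [&& walk_from s p, last s (map hd p) == t & uniq (s :: map hd p)].

Definition path_profile (s t : V) (k : nat) (P : 'I_k -> seq A) : Prop :=
  (forall i, st_path s t (P i)) /\
  (forall i j, i != j -> forall a, a \in P i -> a \notin P j).

Variable R : realFieldType.
Variable tau : A -> R.

Definition tau_path (p : seq A) : R := \sum_(a <- p) tau a.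

Definition Cmax (k : nat) (P : 'I_k -> seq A) : R :=
  \big[Num.max/0]_(i < k) tau_path (P i).

Definition theta (k : nat) (P : 'I_k -> seq A) : R :=
  \sum_(i < k) tau_path (P i).

Definition minmax_optimal (s t : V) (k : nat) (Ps : 'I_k -> seq A) : Prop :=
  path_profile s t Ps /\
  forall Q : 'I_k -> seq A, path_profile s t Q -> Cmax Ps <= Cmax Q.

(* consistency (the same number k of paths is enforced by the types) *)
Definition consistent (k : nat) (P Ps : 'I_k -> seq A) : Prop :=
  theta P <= theta Ps.

Definition sorted_lengths (k : nat) (P : 'I_k -> seq A) : seq R :=
  sort (fun x y : R => y <= x) [seq tau_path (P i) | i <- enum 'I_k].

(* balanced: paper index i in 1..k-1; here p is 0-indexed, so
   (1/i) * (p_0 + ... + p_(i-1)) - p_i <= Cmax Ps for 1 <= i < k *)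
Definition balanced (k : nat) (P Ps : 'I_k -> seq A) : Prop :=
  let p := sorted_lengths P in
  forall i : nat, (1 <= i < k)%N ->
    (i%:R)^-1 * (\sum_(j < i) nth 0 p j) - nth 0 p i <= Cmax Ps.

End Digraph.

(* Let p_0 >= ... >= p_(k-1) be the sorted path lengths of P, C = Cmax of P^*,
   and a_i the mean of the i longest paths.  Balancedness says
   p_i >= a_i - C, hence a_(i+1) >= a_i - C/(i+1); telescoping from a_1 = p_0
   gives a_k >= p_0 - C (H_k - 1).  Consistency gives a_k = theta(P)/k <= C,
   so Cmax(P) = p_0 <= H_k C. *)
From HB Require Import structures.
From mathcomp Require Import all_boot all_order all_algebra.
From mathcomp Require Import ring lra.

Set Implicit Arguments.
Unset Strict Implicit.
Unset Printing Implicit Defensive.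
Import Order.TTheory GRing.Theory Num.Theory.
Local Open Scope ring_scope.

Lemma harmonicS (R : realFieldType) (n : nat) :
  harmonic R n.+1 = harmonic R n + n.+1%:R^-1.
Proof. by rewrite /harmonic big_nat_recr. Qed.

Lemma harmonic1 (R : realFieldType) : harmonic R 1 = 1.
Proof. by rewrite /harmonic big_nat1 invr1. Qed.

Lemma mean_extend_ge (R : realFieldType) (m S x C : R) : 0 < m ->
  S / m - x <= C -> S / m - C / (m + 1) <= (S + x) / (m + 1).
Proof.
move=> m_gt0 hx.
have gap : (S + x) / (m + 1) - (S / m - C / (m + 1)) = (x - (S / m - C)) / (m + 1).
  by field; apply/andP; split; rewrite gt_eqF //; lra.
rewrite -subr_ge0 gap divr_ge0 //; lra.
Qed.

Lemma balanced_prefix_mean_ge (R : realFieldType) (p : seq R) (C : R) (k : nat) :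
  (forall i : nat, (1 <= i < k)%N ->
    i%:R^-1 * (\sum_(j < i) nth 0 p j) - nth 0 p i <= C) ->
  forall i : nat, (1 <= i <= k)%N ->
    nth 0 p 0 - C * (harmonic R i - 1) <= (\sum_(j < i) nth 0 p j) / i%:R.
Proof.
move=> bal; elim=> [//|[|i] IH] /andP[_ lt_ik].
  by rewrite harmonic1 subrr mulr0 subr0 big_ord1 divr1.
rewrite big_ord_recr /= harmonicS -[i.+2%:R]natr1.
have := bal i.+1 lt_ik; rewrite mulrC => /(mean_extend_ge (ltr0Sn _ i)) step.
have mean_i := IH (ltnW lt_ik).
rewrite [C * _](_ : _ = C * (harmonic R i.+1 - 1) + C / (i.+1%:R + 1)); last by ring.
by apply: le_trans step; rewrite opprD addrA lerD2r.
Qed.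

Section PathLengths.
Variables (A : finType) (R : realFieldType) (tau : A -> R) (k : nat).
Implicit Types P : 'I_k -> seq A.

Lemma sorted_lengths_perm P :
  perm_eq (sorted_lengths tau P) [seq tau_path tau (P i) | i <- enum 'I_k].
Proof. by rewrite perm_sort. Qed.

Lemma size_sorted_lengths P : size (sorted_lengths tau P) = k.
Proof. by rewrite size_sort size_map size_enum_ord. Qed.

Lemma sum_sorted_lengths P :
  \sum_(j < k) nth 0 (sorted_lengths tau P) j = theta tau P.
Proof.
transitivity (\sum_(x <- sorted_lengths tau P) x).
  by rewrite [RHS](big_nth 0) size_sorted_lengths big_mkord.
by rewrite (perm_big _ (sorted_lengths_perm P)) big_map big_enum.
Qed.

Lemma tau_path_le_head_sorted_lengths P i :
  tau_path tau (P i) <= nth 0 (sorted_lengths tau P) 0.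
Proof.
have : tau_path tau (P i) \in sorted_lengths tau P.
  by rewrite (perm_mem (sorted_lengths_perm P)) (map_f (fun j => tau_path tau (P j))) ?mem_enum.
have : sorted (fun x y : R => y <= x) (sorted_lengths tau P).
  by apply: sort_sorted => x y; exact: le_total.
case: (sorted_lengths tau P) => [//|y q] /= /(order_path_min ge_trans) /allP q_le.
by rewrite inE => /predU1P[->|/q_le].
Qed.

Lemma theta_le_Cmax P : theta tau P <= k%:R * Cmax tau P.
Proof.
rewrite mulr_natl -[X in _ *+ X]card_ord -sumr_const; apply: ler_sum => i _.
exact: (le_bigmax (0 : R) (fun i => tau_path tau (P i)) i).
Qed.

Lemma Cmax_le_head_sorted_lengths P :
  (forall a, 0 <= tau a) -> (0 < k)%N ->
  Cmax tau P <= nth 0 (sorted_lengths tau P) 0.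
Proof.
move=> tau_ge0 k_gt0; apply: bigmax_le => [|i _].
  apply: le_trans (tau_path_le_head_sorted_lengths P (Ordinal k_gt0)).
  exact: sumr_ge0.
exact: tau_path_le_head_sorted_lengths.
Qed.

End PathLengths.

Theorem lemma8 (R : realFieldType) (V A : finType) (tl hd : A -> V)
  (s t : V) (tau : A -> R) (k : nat) (Ps P : 'I_k -> seq A) :
  series_parallel tl hd s t ->
  (forall a, 0 <= tau a) ->
  minmax_optimal tl hd tau s t Ps ->
  path_profile tl hd s t P ->
  consistent tau P Ps ->
  balanced tau P Ps ->
  Cmax tau P <= harmonic R k * Cmax tau Ps.
Proof.
move=> _ tau_ge0 _ _ cons bal.
case: k Ps P cons bal => [|k] Ps P cons bal.
  by rewrite /Cmax big_ord0 /harmonic big_geq // mul0r.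
have k_gt0 : (0 < k.+1%:R :> R) by rewrite ltr0n.
have mean_ge := balanced_prefix_mean_ge bal (i := k.+1) (leqnn _).
rewrite sum_sorted_lengths in mean_ge.
have mean_le : theta tau P / k.+1%:R <= Cmax tau Ps.
  rewrite ler_pdivrMr // mulrC.
  exact: le_trans cons (theta_le_Cmax _ _).
apply: le_trans (Cmax_le_head_sorted_lengths P tau_ge0 (ltn0Sn k)) _.
have := le_trans mean_ge mean_le; rewrite mulrBr mulr1 mulrC; lra.
Qed.
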